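(* Let $n,k,R$ be positive integers with $k<n$, and let $L=\min\{k,R\}$. The capacity (in bits per channel use) of the Coupon Collector Channel $\mathrm{CC}(n,k,R)$ is \[ \mathcal{C}_{\mathrm{CC}} \;=\; \log_2\binom{n}{k} \;-\; k^{-R}\sum_{\ell=1}^{L}\binom{k}{\ell}\genfrac{\{}{\}}{0pt}{}{R}{\ell}\,\ell!\,\log_2\binom{n-\ell}{k-\ell}, \] and this capacity is achieved by the uniform distribution on the input alphabet $\mathcal{X}$.
   Context: Let $\mathcal{M}$ be a set of $n$ distinct elements (''motifs'') and $k$ an integer with $1\le k<n$. The input alphabet $\mathcal{X}$ is the set of all $k$-element subsets $\mathbf{x}\subset\mathcal{M}$, so $|\mathcal{X}|=\binom{n}{k}$. For a positive integer $R$, the Coupon Collector Channel $\mathrm{CC}(n,k,R)$ is the discrete memoryless channel which, on input $\mathbf{x}\in\mathcal{X}$, outputs $\mathbf{y}=(y_1,\dots,y_R)\in\mathcal{M}^R$ where $y_1,\dots,y_R$ are drawn independently and uniformly at random from $\mathbf{x}$ (so $P(\mathbf{y}\mid\mathbf{x})=k^{-R}$ if every $y_i\in\mathbf{x}$ and $0$ otherwise). The output alphabet $\mathcal{Y}$ is the set of $R$-tuples over $\mathcal{M}$ containing between $1$ and $L=\min\{k,R\}$ distinct elements. The capacity is $\max_{P_X} I(X;Y)$ over input distributions on $\mathcal{X}$. $\genfrac{\{}{\}}{0pt}{}{R}{\ell}=\frac{1}{\ell!}\sum_{i=0}^{\ell}(-1)^{\ell-i}\binom{\ell}{i}i^R$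 denotes the Stirling number of the second kind. *)

From HB Require Import structures.
From mathcomp Require Import all_boot all_order all_algebra.
From mathcomp Require Import reals exp.
Set Implicit Arguments. Unset Strict Implicit. Unset Printing Implicit Defensive.
Import Order.TTheory GRing.Theory Num.Theory.
Local Open Scope ring_scope.

Definition log2 {R : realType} (x : R) : R := ln x / ln 2.

Definition stirling2 {R : realType} (r l : nat) : R :=
  (l`!%:R)^-1 * \sum_(i < l.+1) (-1) ^+ (l - i) * 'C(l, i)%:R * (i ^ r)%:R.

Definition CCin (n k : nat) := {x : {set 'I_n} | #|x| == k}.

(** Output: R-tuples over M (tuples with more than min(k,R) distinct
    elements have probability zero, so they do not affect I(X;Y)). *)
Definition CCout (n r : nat) := {ffun 'I_r -> 'I_n}.

Definition CCchan {R : realType} (n k r : nat) (x : CCin n k) (y : CCout n r) : R :=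
  if [forall i, y i \in val x] then ((k%:R) ^- r) else 0.

Definition is_dist {R : realType} {T : finType} (P : T -> R) : Prop :=
  (forall t, 0 <= P t) /\ \sum_t P t = 1.

Definition mutinf {R : realType} {X Y : finType} (P : X -> R) (W : X -> Y -> R) : R :=
  \sum_(x : X) \sum_(y : Y)
     let Q := \sum_(x' : X) P x' * W x' y in
     (if P x * W x y == 0 then 0 else P x * W x y * log2 (W x y / Q)).

Definition is_capacity {R : realType} {X Y : finType} (W : X -> Y -> R) (C : R) : Prop :=
  (exists P : X -> R, is_dist P /\ mutinf P W = C) /\
  (forall P : X -> R, is_dist P -> mutinf P W <= C).

Definition unif {R : realType} {T : finType} : T -> R := fun _ => (#|T|%:R)^-1.

From HB Require Import structures.
From mathcomp Require Import all_boot all_order all_algebra.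
From mathcomp Require Import reals exp.
From mathcomp Require Import zify ring lra.

(* For any input distribution P, I(P; W) = sum_x P x * D(W_x || Q0) - D(Q_P || Q0),
   where Q0 is the output distribution of the uniform input; by Gibbs' inequality the
   last term is nonpositive. For the coupon collector channel, Q0 y only depends on the
   number l of distinct motifs in y (y is compatible with 'C(n - l, k - l) inputs), so
   all the row divergences D(W_x || Q0) coincide: their common value is the capacity,
   achieved by the uniform input. Summing over the outputs compatible with a fixed
   input, grouped by their set of motifs, needs the number l! S(R, l) of surjections
   from 'I_R onto an l-set, which is computed by binomial inversion of
   sum_i 'C(m, i) * surj(R, i) = m ^ R. *)

Set Implicit Arguments.
Unset Strict Implicit.
Import Order.TTheory GRing.Theory Num.Theory.
Local Open Scope ring_scope.

Lemma mul_bin_trinomial (m i j : nat) :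
  ('C(m, i + j) * 'C(i + j, j) = 'C(m, j) * 'C(m - j, i))%N.
Proof.
have [lt_m_ij|le_ij_m] := ltnP m (i + j).
  rewrite bin_small // mul0n.
  have [lt_mj|le_jm] := ltnP m j; first by rewrite (bin_small lt_mj).
  by rewrite (@bin_small (m - j) i) ?muln0 //; lia.
apply/eqP; rewrite -(@eqn_pmul2r (j`! * i`! * (m - (i + j))`!)) ?muln_gt0 ?fact_gt0 //.
have e_ij := @bin_fact (i + j) j (leq_addl _ _); rewrite addnK in e_ij.
have e_m := @bin_fact m (i + j) le_ij_m.
have e_mj := @bin_fact (m - j) i ltac:(lia).
have e_j := @bin_fact m j ltac:(lia).
rewrite -subnDA addnC in e_mj.
apply/eqP; transitivity ('C(m, i + j) * ('C(i + j, j) * (j`! * i`!) * (m - (i + j))`!))%N.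
  by ring.
rewrite e_ij e_m -e_j -e_mj; ring.
Qed.

Section SurjectionNumbers.
Variable R : comNzRingType.

Lemma sum_signed_bin (p : nat) :
  \sum_(i < p.+1) (-1) ^+ i * 'C(p, i)%:R = (p == 0)%:R :> R.
Proof.
have := exprBn (1 : R) 1 p; rewrite subrr expr0n => ->.
by apply: eq_bigr => i _; rewrite !expr1n !mulr1 mulr_natr.
Qed.

Lemma sum_signed_bin_bin (m j : nat) : (j <= m)%N ->
  \sum_(i < m.+1) (-1) ^+ (i - j) * ('C(m, i) * 'C(i, j))%:R = (j == m)%:R :> R.
Proof.
move=> le_jm.
pose F i : R := (-1) ^+ (i - j) * ('C(m, i) * 'C(i, j))%:R.
rewrite -(big_mkord xpredT F) (big_cat_nat (n := j)) //=; last by rewrite ltnW.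
rewrite big1_seq ?add0r => [|i /andP[_]]; last first.
  by rewrite mem_index_iota => /andP[_ lt_ij]; rewrite /F (bin_small lt_ij) ?muln0 ?mulr0.
rewrite -{1}(add0n j) big_addn subSn // big_mkord /F.
under eq_bigr => i _ do rewrite addnK mul_bin_trinomial natrM mulrCA.
rewrite -mulr_sumr sum_signed_bin subn_eq0.
by case: ltngtP le_jm => // [lt_jm|->] _; rewrite ?mulr0 // binn mulr1.
Qed.

(* Inclusion-exclusion count m! S(r, m) of the surjections from an r-set onto an m-set. *)
Definition nsurj (r m : nat) : R :=
  \sum_(i < m.+1) (-1) ^+ (m - i) * 'C(m, i)%:R * (i ^ r)%:R.

Lemma sum_bin_nsurj (r m : nat) :
  \sum_(i < m.+1) 'C(m, i)%:R * nsurj r i = (m ^ r)%:R.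
Proof.
have nsurj_widen (i : 'I_m.+1) :
    nsurj r i = \sum_(j < m.+1) (-1) ^+ (i - j) * 'C(i, j)%:R * (j ^ r)%:R.
  rewrite /nsurj (big_ord_widen m.+1 (fun j => (-1) ^+ (i - j) * 'C(i, j)%:R * (j ^ r)%:R)) //.
  rewrite big_mkcond; apply: eq_bigr => j _; case: ltnP => // lt_ij.
  by rewrite bin_small // mulr0 mul0r.
under eq_bigr do rewrite nsurj_widen mulr_sumr.
rewrite exchange_big /=.
transitivity (\sum_(j < m.+1) (j ^ r)%:R * (j == m :> nat)%:R : R).
  apply: eq_bigr => j _; have le_jm : (j <= m)%N by rewrite -ltnS.
  rewrite -(@sum_signed_bin_bin m j le_jm) mulr_sumr.
  by apply: eq_bigr => i _; rewrite natrM; ring.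
rewrite (bigD1 ord_max) //= eqxx mulr1 big1 ?addr0 // => j.
by rewrite -val_eqE => /negbTE ->; rewrite mulr0.
Qed.

End SurjectionNumbers.

Lemma sum_subsets_card (R : pzSemiRingType) (T : finType) (B : {set T}) (F : nat -> R) :
  \sum_(A : {set T} | A \subset B) F #|A| = \sum_(i < #|B|.+1) 'C(#|B|, i)%:R * F i.
Proof.
rewrite (partition_big (fun A : {set T} => inord #|A| : 'I_#|B|.+1) xpredT) //=.
apply: eq_bigr => i _.
rewrite (eq_bigl (fun A => A \in [set A : {set T} | A \subset B & #|A| == i])) => [|A].
  rewrite (eq_bigr (fun _ => F i)) => [|A]; first by rewrite sumr_const cards_draws mulr_natl.
  by rewrite inE => /andP[_ /eqP ->].
rewrite !inE; case: (boolP (A \subset B)) => //= sub_AB.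
have lt_A : (#|A| < #|B|.+1)%N by rewrite ltnS subset_leq_card.
by rewrite -val_eqE /= inordK.
Qed.

Lemma card_supsets_draws (T : finType) (A : {set T}) (k : nat) :
  (#|A| <= k <= #|T|)%N ->
  #|[set X : {set T} | A \subset X & #|X| == k]| = 'C(#|T| - #|A|, k - #|A|).
Proof.
move=> /andP[le_Ak le_kT].
have -> : [set X : {set T} | A \subset X & #|X| == k] =
          @setC T @: [set D : {set T} | D \subset ~: A & #|D| == #|T| - k]%N.
  apply/setP => X; rewrite -{2}(setCK X) (mem_imset _ _ (@setC_inj T)) !inE.
  rewrite setCS; congr (_ && _); apply/eqP/eqP; have := cardsC X; lia.
rewrite (card_imset _ (@setC_inj T)) cards_draws.
have -> : #|~: A| = (#|T| - #|A|)%N by have := cardsC A; lia.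
rewrite -bin_sub; last by lia.
by have -> : (#|T| - #|A| - (#|T| - k) = k - #|A|)%N by lia.
Qed.

Section FfunRange.
Variables (aT T : finType).

Definition ffun_range (f : {ffun aT -> T}) : {set T} := [set f i | i : aT].

Lemma ffun_range_subset (f : {ffun aT -> T}) (B : {set T}) :
  (ffun_range f \subset B) = [forall i, f i \in B].
Proof.
apply/subsetP/forallP => [sub_fB i | fB _ /imsetP[i _ ->] //].
by apply: sub_fB; apply: imset_f.
Qed.

Lemma card_ffun_range_bounds (f : {ffun aT -> T}) :
  (0 < #|aT|)%N -> (0 < #|ffun_range f| <= #|aT|)%N.
Proof.
case/card_gt0P => i _; rewrite leq_imset_card andbT.
by apply/card_gt0P; exists (f i); apply: imset_f.
Qed.

Lemma card_ffun_range_subset (B : {set T}) :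
  #|[set f : {ffun aT -> T} | ffun_range f \subset B]| = (#|B| ^ #|aT|)%N.
Proof.
rewrite -card_ffun_on; apply: eq_card => f.
by rewrite inE ffun_range_subset; apply/forallP/ffun_onP.
Qed.

Variable R : comNzRingType.

Lemma sum_ffun_range (B : {set T}) (G : {set T} -> R) :
  \sum_(f : {ffun aT -> T} | ffun_range f \subset B) G (ffun_range f) =
  \sum_(A : {set T} | A \subset B) #|[set f | ffun_range f == A]|%:R * G A.
Proof.
rewrite (partition_big ffun_range (fun A => A \subset B)) //=.
apply: eq_bigr => A sub_AB.
rewrite (eq_bigl (fun f => f \in [set f | ffun_range f == A])) => [|f]; last first.
  by rewrite inE; case: eqVneq => [->|]; rewrite ?sub_AB ?andbF.
rewrite (eq_bigr (fun _ => G A)) => [|f]; last by rewrite inE => /eqP ->.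
by rewrite sumr_const mulr_natl.
Qed.

Lemma card_ffun_range_eq (A : {set T}) :
  #|[set f : {ffun aT -> T} | ffun_range f == A]|%:R = nsurj R #|aT| #|A|.
Proof.
move: {2}#|A| (erefl #|A|) => m; elim/ltn_ind: m A => m IH A card_A.
have count_subset : ((#|A| ^ #|aT|)%:R : R) =
    \sum_(A' : {set T} | A' \subset A) #|[set f | ffun_range f == A']|%:R.
  rewrite -card_ffun_range_subset -sum1_card natr_sum.
  rewrite (eq_bigl (fun f => ffun_range f \subset A)) => [|f]; last by rewrite inE.
  by rewrite (sum_ffun_range A (fun _ => 1)); under eq_bigr do rewrite mulr1.
move: count_subset; rewrite -sum_bin_nsurj -(@sum_subsets_card R T A (nsurj R #|aT|)).
rewrite (bigD1 A) // [in RHS](bigD1 A) //=.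
have proper_subsets : \sum_(A' : {set T} | (A' \subset A) && (A' != A))
    #|[set f | ffun_range f == A']|%:R = \sum_(A' : {set T} | (A' \subset A) && (A' != A))
    nsurj R #|aT| #|A'|.
  apply: eq_bigr => A' /andP[sub_A'A ne_A'A]; apply: (IH #|A'|) => //.
  by rewrite -card_A proper_card // properEneq ne_A'A.
by rewrite proper_subsets => /addIr.
Qed.

Lemma sum_ffun_range_card (X : {set T}) (F : nat -> R) : (0 < #|aT|)%N ->
  \sum_(f : {ffun aT -> T} | ffun_range f \subset X) F #|ffun_range f| =
  \sum_(1 <= l < (minn #|X| #|aT|).+1) 'C(#|X|, l)%:R * nsurj R #|aT| l * F l.
Proof.
(* [lia] below must see the two elaborations of [#|aT|] as a single atom. *)
move=> aT_gt0; rewrite (sum_ffun_range X (fun A => F #|A|)); set r := #|aT| in aT_gt0 *.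
pose G l := if (0 < l <= r)%N then nsurj R r l * F l else 0.
transitivity (\sum_(A : {set T} | A \subset X) G #|A|).
  apply: eq_bigr => A _; rewrite /G; case: ifP => [_|out_A]; first by rewrite card_ffun_range_eq.
  suff -> : [set f : {ffun aT -> T} | ffun_range f == A] = set0 by rewrite cards0 mul0r.
  apply/setP => f; rewrite !inE; apply: contraFF out_A => /eqP <-.
  exact: card_ffun_range_bounds.
rewrite sum_subsets_card -(big_mkord xpredT (fun l => 'C(#|X|, l)%:R * G l)).
rewrite big_ltn // (big_cat_nat (n := (minn #|X| r).+1)) //=; last by rewrite ltnS geq_minl.
rewrite {1}/G /= mulr0 add0r [X in _ + X]big_nat [X in _ + X]big1 ?addr0 => [|l le_l].
  (* The lower bound [1] of the range is elaborated as the [ring_scope] one of [nat]. *)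
  apply: eq_big_nat => l /andP[l_gt0 le_l]; have {}l_gt0 : (0 < l)%N := l_gt0.
  by rewrite /G ifT ?mulrA //; lia.
by rewrite /G ifF ?mulr0 //; lia.
Qed.

End FfunRange.

Section Log2.
Variable R : realType.

Lemma ln2_gt0 : 0 < ln (2 : R).
Proof. by rewrite ln_gt0 // ltr1n. Qed.

Lemma log2M (a b : R) : 0 < a -> 0 < b -> log2 (a * b) = log2 a + log2 b.
Proof. by move=> a_gt0 b_gt0; rewrite /log2 lnM ?posrE // mulrDl. Qed.

Lemma log2_div (a b : R) : 0 < a -> 0 < b -> log2 (a / b) = log2 a - log2 b.
Proof. by move=> a_gt0 b_gt0; rewrite /log2 ln_div ?posrE // mulrBl. Qed.

Lemma log2_le_sub1 (x : R) : 0 < x -> log2 x <= (x - 1) / ln 2.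
Proof.
move=> x_gt0; rewrite /log2 ler_pM2r ?invr_gt0 ?ln2_gt0 //.
by have := @le_ln1Dx R (x - 1); rewrite addrCA subrr addr0; apply; lra.
Qed.

Lemma mul_log2_ratio_le (p q : R) : 0 <= p -> 0 <= q -> (0 < p -> 0 < q) ->
  p * log2 (q / p) <= (q - p) / ln 2.
Proof.
move=> p_ge0 q_ge0 q_gt0; have [->|p_gt0] := eqVneq p 0.
  by rewrite mul0r subr0 divr_ge0 // ltW ?ln2_gt0.
have {}p_gt0 : 0 < p by rewrite lt0r p_gt0.
have := @log2_le_sub1 (q / p) (divr_gt0 (q_gt0 p_gt0) p_gt0).
rewrite -(ler_pM2l p_gt0) => /le_trans; apply; rewrite mulrA.
by rewrite mulrBr mulr1 mulrCA mulfV ?gt_eqF // mulr1.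
Qed.

Lemma sum_log2_ratio_le0 (T : finType) (p q : T -> R) :
  (forall t, 0 <= p t) -> (forall t, 0 <= q t) -> (forall t, 0 < p t -> 0 < q t) ->
  \sum_t q t <= \sum_t p t -> \sum_t p t * log2 (q t / p t) <= 0.
Proof.
move=> p_ge0 q_ge0 q_gt0 le_sum.
apply: (le_trans (ler_sum _ (fun t _ => mul_log2_ratio_le (p_ge0 t) (q_ge0 t) (q_gt0 t)))).
rewrite -mulr_suml sumrB; apply: mulr_le0_ge0; first by rewrite subr_le0.
by rewrite invr_ge0 ltW ?ln2_gt0.
Qed.

End Log2.

Section ChannelCapacity.
Variables (R : realType) (X Y : finType) (W : X -> Y -> R).
Hypothesis W_ge0 : forall x y, 0 <= W x y.
Hypothesis W_sum1 : forall x, \sum_y W x y = 1.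

Definition out_dist (P : X -> R) (y : Y) : R := \sum_x P x * W x y.

Definition row_divergence (Q : Y -> R) (x : X) : R := \sum_y W x y * log2 (W x y / Q y).

Lemma le_out_dist (P : X -> R) x y : (forall x, 0 <= P x) -> P x * W x y <= out_dist P y.
Proof.
move=> P_ge0; rewrite /out_dist (bigD1 x) //= lerDl.
by apply: sumr_ge0 => x' _; rewrite mulr_ge0.
Qed.

Lemma out_dist_ge0 (P : X -> R) y : (forall x, 0 <= P x) -> 0 <= out_dist P y.
Proof. by move=> P_ge0; apply: sumr_ge0 => x _; rewrite mulr_ge0. Qed.

Lemma out_dist_gt0 (P : X -> R) x y :
  (forall x, 0 < P x) -> 0 < W x y -> 0 < out_dist P y.
Proof.
move=> P_gt0 W_gt0; apply: lt_le_trans (mulr_gt0 (P_gt0 x) W_gt0) _.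
by apply: le_out_dist => x'; apply: ltW.
Qed.

Lemma sum_out_dist (P : X -> R) : is_dist P -> \sum_y out_dist P y = 1.
Proof.
case=> _ P_sum1; rewrite /out_dist exchange_big /=.
by under eq_bigr do rewrite -mulr_sumr W_sum1 mulr1.
Qed.

Lemma mutinf_decomp (P P0 : X -> R) : is_dist P -> (forall x, 0 < P0 x) ->
  mutinf P W = \sum_x P x * row_divergence (out_dist P0) x +
               \sum_y out_dist P y * log2 (out_dist P0 y / out_dist P y).
Proof.
move=> [P_ge0 P_sum1] P0_gt0.
have term x y : (if P x * W x y == 0 then 0 else P x * W x y * log2 (W x y / out_dist P y))
    = P x * (W x y * log2 (W x y / out_dist P0 y)) +
      P x * W x y * log2 (out_dist P0 y / out_dist P y).
  have [PW0|PW_neq0] := eqVneq (P x * W x y) 0; first by rewrite mulrA PW0 !mul0r addr0.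
  have PW_gt0 : 0 < P x * W x y by rewrite lt0r PW_neq0 mulr_ge0.
  have W_gt0 : 0 < W x y.
    by rewrite lt0r W_ge0 andbT; apply: contraNneq PW_neq0 => ->; rewrite mulr0.
  have Q_gt0 : 0 < out_dist P y := lt_le_trans PW_gt0 (le_out_dist x y P_ge0).
  have Q0_gt0 : 0 < out_dist P0 y := out_dist_gt0 P0_gt0 W_gt0.
  have -> : W x y / out_dist P y = (W x y / out_dist P0 y) * (out_dist P0 y / out_dist P y).
    by field; rewrite !gt_eqF.
  by rewrite log2M ?divr_gt0 // mulrA mulrDr.
rewrite /mutinf /=; under eq_bigr do under eq_bigr do rewrite term.
under eq_bigr do rewrite big_split -mulr_sumr.
rewrite big_split exchange_big /=; congr (_ + _); apply: eq_bigr => y _.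
by rewrite [in RHS]/out_dist mulr_suml.
Qed.

Lemma capacity_of_const_row_divergence (P0 : X -> R) (c : R) :
  is_dist P0 -> (forall x, 0 < P0 x) ->
  (forall x, row_divergence (out_dist P0) x = c) ->
  is_capacity W c /\ mutinf P0 W = c.
Proof.
move=> P0_dist P0_gt0 div_c.
have mutinfE P : is_dist P -> mutinf P W =
    c + \sum_y out_dist P y * log2 (out_dist P0 y / out_dist P y).
  move=> P_dist; rewrite (mutinf_decomp P_dist P0_gt0).
  under eq_bigr do rewrite div_c.
  by case: P_dist => _ P_sum1; rewrite -mulr_suml P_sum1 mul1r.
have mutinf_P0 : mutinf P0 W = c.
  rewrite mutinfE // big1 ?addr0 // => y _.
  have [->|Q0_neq0] := eqVneq (out_dist P0 y) 0; first by rewrite mul0r.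
  by rewrite divff // /log2 ln1 mul0r mulr0.
split=> //; split=> [|P P_dist]; first by exists P0.
rewrite mutinfE // gerDl; case: (P_dist) => P_ge0 _.
have P0_ge0 x : 0 <= P0 x by apply: ltW.
apply: sum_log2_ratio_le0 => [y|y|y Q_gt0|]; rewrite ?out_dist_ge0 //; last first.
  by rewrite !sum_out_dist.
rewrite lt0r out_dist_ge0 // andbT; apply: contraTneq Q_gt0 => Q0_eq0.
have W_eq0 x : W x y = 0.
  have := @psumr_eq0P _ _ _ _ (fun x _ => mulr_ge0 (P0_ge0 x) (W_ge0 x y)) Q0_eq0 x isT.
  by move/eqP; rewrite mulf_eq0 gt_eqF //= => /eqP.
by rewrite -leNgt /out_dist big1 // => x _; rewrite W_eq0 mulr0.
Qed.

End ChannelCapacity.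

Lemma card_CCin (n k : nat) : #|{: CCin n k}| = 'C(n, k).
Proof.
rewrite card_sig -[n in RHS](card_ord n) -card_draws.
by apply: eq_card => X; rewrite !inE.
Qed.

Section CouponCollector.
Variables (R : realType) (n k r : nat).
Hypotheses (k_gt0 : (0 < k)%N) (le_kn : (k <= n)%N).

Let W := @CCchan R n k r.
Let U := @unif R (CCin n k).

Lemma CCchanE x y : W x y = if ffun_range y \subset val x then k%:R ^- r else 0.
Proof. by rewrite /W /CCchan ffun_range_subset. Qed.

Lemma CCchan_ge0 x y : 0 <= W x y.
Proof. by rewrite CCchanE; case: ifP => // _; rewrite invr_ge0 exprn_ge0. Qed.

Lemma card_ffun_range_subset_CCin (x : CCin n k) :
  #|[set y : CCout n r | ffun_range y \subset val x]| = (k ^ r)%N.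
Proof. by rewrite card_ffun_range_subset (eqP (valP x)) card_ord. Qed.

Lemma sum_CCchan x : \sum_y W x y = 1.
Proof.
under eq_bigr do rewrite CCchanE.
rewrite -big_mkcond sumr_const.
rewrite (eq_card (B := [set y : CCout n r | ffun_range y \subset val x])) => [|y]; last first.
  by rewrite inE.
rewrite card_ffun_range_subset_CCin -(mulr_natr (k%:R ^- r)) natrX.
by rewrite mulVf // expf_neq0 // pnatr_eq0 -lt0n.
Qed.

Lemma card_CCin_supsets (A : {set 'I_n}) : (#|A| <= k)%N ->
  #|[set x : CCin n k | A \subset val x]| = 'C(n - #|A|, k - #|A|).
Proof.
move=> le_Ak; have := @card_supsets_draws _ A k.
rewrite card_ord le_Ak le_kn => /(_ isT) <-; rewrite -(card_imset _ val_inj).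
apply: eq_card => X; rewrite inE.
apply/imsetP/andP => [[x] | [sub_AX card_X]].
  by rewrite inE => ? ->; split; last exact: valP x.
by exists (exist _ X card_X); rewrite ?inE.
Qed.

Lemma unifE x : U x = ('C(n, k)%:R)^-1.
Proof. by rewrite /U /unif card_CCin. Qed.

Lemma unif_gt0 x : 0 < U x.
Proof. by rewrite unifE invr_gt0 ltr0n bin_gt0. Qed.

Lemma unif_dist : is_dist U.
Proof.
split=> [x|]; first exact: ltW (unif_gt0 x).
rewrite /U /unif sumr_const card_CCin -(mulr_natr ('C(n, k)%:R)^-1).
by rewrite mulVf // pnatr_eq0 -lt0n bin_gt0.
Qed.

Lemma out_dist_unif (x : CCin n k) (y : CCout n r) : ffun_range y \subset val x ->
  out_dist W U y = ('C(n, k)%:R)^-1 * (k%:R ^- r *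
    'C(n - #|ffun_range y|, k - #|ffun_range y|)%:R).
Proof.
move=> sub_yx; have le_yk : (#|ffun_range y| <= k)%N.
  by rewrite -(eqP (valP x)) subset_leq_card.
rewrite /out_dist (eq_bigr (fun x => ('C(n, k)%:R)^-1 * W x y)) => [|x' _]; last first.
  by rewrite unifE.
rewrite -mulr_sumr; congr (_ * _); under eq_bigr do rewrite CCchanE.
rewrite -big_mkcond sumr_const -(mulr_natr (k%:R ^- r)) -(card_CCin_supsets le_yk).
by congr (_ * _%:R); apply: eq_card => x'; rewrite inE.
Qed.

Lemma row_divergence_unif (x : CCin n k) : (0 < r)%N ->
  row_divergence W (out_dist W U) x =
  log2 ('C(n, k)%:R) - k%:R ^- r * \sum_(1 <= l < (minn k r).+1)
     'C(k, l)%:R * nsurj R r l * log2 ('C(n - l, k - l)%:R).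
Proof.
move=> r_gt0; have kr_neq0 : k%:R ^+ r != 0 :> R by rewrite expf_neq0 // pnatr_eq0 -lt0n.
transitivity (\sum_(y : CCout n r | ffun_range y \subset val x) k%:R ^- r *
    (log2 ('C(n, k)%:R) - log2 ('C(n - #|ffun_range y|, k - #|ffun_range y|)%:R) : R)).
  rewrite [RHS]big_mkcond; apply: eq_bigr => y _; rewrite CCchanE.
  case: ifP => [sub_yx|_]; last by rewrite mul0r.
  have le_yk : (#|ffun_range y| <= k)%N by rewrite -(eqP (valP x)) subset_leq_card.
  rewrite (out_dist_unif sub_yx) -log2_div ?ltr0n ?bin_gt0 //; last by lia.
  congr (_ * log2 _); field.
  by rewrite kr_neq0 !pnatr_eq0 -!lt0n !bin_gt0 le_kn; lia.
rewrite -mulr_sumr sumrB sumr_const.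
rewrite (sum_ffun_range_card _ (fun l => log2 ('C(n - l, k - l)%:R : R))) ?card_ord //.
rewrite (eq_card (B := [set y : CCout n r | ffun_range y \subset val x])) => [|y]; last first.
  by rewrite inE.
rewrite card_ffun_range_subset_CCin (eqP (valP x)) -(mulr_natr (log2 _)) natrX.
by rewrite mulrBr mulrCA mulVf // mulr1.
Qed.

End CouponCollector.

Lemma stirling2_mul_fact (R : realType) (r l : nat) :
  stirling2 r l * l`!%:R = nsurj R r l :> R.
Proof. by rewrite /stirling2 mulrC mulrA mulfV ?mul1r // pnatr_eq0 -lt0n fact_gt0. Qed.

Theorem theorem1 (R : realType) (n k r : nat)
  (hk : (0 < k)%N) (hkn : (k < n)%N) (hr : (0 < r)%N) :
  let L := minn k r in
  let C : R := log2 ('C(n, k)%:R) -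
      (k%:R ^- r) * \sum_(1 <= l < L.+1)
         'C(k, l)%:R * stirling2 r l * (l`!)%:R * log2 ('C(n - l, k - l)%:R) in
  is_capacity (@CCchan R n k r) C /\
  mutinf (@unif R (CCin n k)) (@CCchan R n k r) = C.
Proof.
move=> L C; have le_kn := ltnW hkn.
apply: capacity_of_const_row_divergence => [x y|x|||x].
- exact: CCchan_ge0.
- exact: sum_CCchan.
- exact: unif_dist.
- exact: unif_gt0.
rewrite row_divergence_unif // /C /L; congr (_ - _ * _); apply: eq_big_nat => l _.
by rewrite -(mulrA _ (stirling2 r l)) stirling2_mul_fact.
Qed.
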